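(* Let $\mathfrak{n}$ be a $2$-step nilpotent real Lie algebra with center $\mathfrak{z}$ such that $\mathfrak{n}'=[\mathfrak{n},\mathfrak{n}]=\mathfrak{z}$ and $\dim\mathfrak{n}'$ is odd. Then every complex structure on $\mathfrak{n}$ is $3$-step.
   Context: A complex structure on a real Lie algebra $\mathfrak{g}$ is a linear map $J:\mathfrak{g}\to\mathfrak{g}$ with $J^2=-I$ and $N_J(x,y):=[x,y]+J([Jx,y]+[x,Jy])-[Jx,Jy]=0$ for all $x,y\in\mathfrak{g}$. Given such $J$, define inductively $\mathfrak{a}_0(J)=0$ and $\mathfrak{a}_\ell(J)=\{x\in\mathfrak{g}: [x,\mathfrak{g}]\subset\mathfrak{a}_{\ell-1}(J)\text{ and }[Jx,\mathfrak{g}]\subset\mathfrak{a}_{\ell-1}(J)\}$ for $\ell\ge1$. $J$ is called nilpotent if $\mathfrak{a}_t(J)=\mathfrak{g}$ for some positive integer $t$, and $t$-step if $t$ is the smallest such integer. A Lie algebra $\mathfrak{n}$ is $2$-step nilpotent if it is non-abelian and $\mathfrak{n}'\subset\mathfrak{z}$. *)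

From HB Require Import structures.
From mathcomp Require Import all_boot all_order all_algebra.
From mathcomp Require Import reals.
Set Implicit Arguments. Unset Strict Implicit. Unset Printing Implicit Defensive.
Import Order.TTheory GRing.Theory Num.Theory.
Local Open Scope ring_scope.

Section Lie.
Variables (R : fieldType) (V : vectType R).

Definition is_lie_bracket (br : V -> V -> V) : Prop :=
  [/\ (forall a x y z, br (a *: x + y) z = a *: br x z + br y z),
      (forall a x y z, br z (a *: x + y) = a *: br z x + br z y),
      (forall x, br x x = 0) &
      (forall x y z, br x (br y z) + br y (br z x) + br z (br x y) = 0)].

Definition in_derived (br : V -> V -> V) (x : V) : Prop :=
  exists s : seq (V * V), x = \sum_(p <- s) br p.1 p.2.

Definition in_center (br : V -> V -> V) (x : V) : Prop :=
  forall y, br x y = 0.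

Definition two_step_nilpotent (br : V -> V -> V) : Prop :=
  (exists x y, br x y <> 0) /\ (forall x, in_derived br x -> in_center br x).

Definition complex_structure (br : V -> V -> V) (J : 'End(V)) : Prop :=
  (forall x, J (J x) = - x) /\
  (forall x y, br x y + J (br (J x) y + br x (J y)) - br (J x) (J y) = 0).

Fixpoint asc_series (br : V -> V -> V) (J : 'End(V)) (l : nat) : V -> Prop :=
  match l with
  | 0 => fun x => x = 0
  | l'.+1 => fun x => (forall y, asc_series br J l' (br x y)) /\
                      (forall y, asc_series br J l' (br (J x) y))
  end.

Definition t_step (br : V -> V -> V) (J : 'End(V)) (t : nat) : Prop :=
  (0 < t)%N /\ (forall x, asc_series br J t x) /\
  (forall s, (0 < s < t)%N -> exists x, ~ asc_series br J s x).

End Lie.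

From HB Require Import structures.
From mathcomp Require Import all_boot all_order all_algebra.
From mathcomp Require Import reals.
From Stdlib Require Import Classical.
Set Implicit Arguments. Unset Strict Implicit. Unset Printing Implicit Defensive.
Import Order.TTheory GRing.Theory Num.Theory passmx.
Local Open Scope ring_scope.

(* Every bracket is central, and the Nijenhuis condition with a central
   argument c reads J [Jc, y] = [Jc, Jy]; hence the centre lies in a_2(J) and
   a_3(J) = n.  Non-abelianity gives a_1(J) <> n.  If a_2(J) = n, then every
   J [x, y] is central, so n' = z is J-invariant and J restricts to a complex
   structure on the odd-dimensional space n', which is impossible because
   det(J)^2 = (-1)^dim. *)

Lemma lfun_sqrN1_even_dim (R : realFieldType) (U : vectType R) (f : 'End(U)) :
  (forall x, f (f x) = - x) -> ~~ odd (\dim {:U}).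
Proof.
move=> ffN; have eB := vbasisP (fullv : {vspace U}).
set e := vbasis fullv in eB.
have ffE : (f \o f)%VF = - \1%VF.
  by apply/lfunP => x; rewrite comp_lfunE !lfunE /= ffN lfunE.
have mxffE : mxof e e f *m mxof e e f = - 1%:M.
  by rewrite -(mxof_comp e e eB) ffE linearN /= mxof1 // (basis_free eB).
have := congr1 determinant mxffE.
rewrite det_mulmx -scaleN1r detZ det_scalar expr1n mulr1 -signr_odd.
case: (odd _) => // /eqP; rewrite expr1 -expr2 => /eqP sqr_detN1.
by have := sqr_ge0 (\det (mxof e e f)); rewrite sqr_detN1 ler0N1.
Qed.

Lemma stable_sqrN1_even_dim (R : realFieldType) (V : vectType R)
    (W : {vspace V}) (f : 'End(V)) :
  (forall x, f (f x) = - x) -> (forall x, x \in W -> f x \in W) ->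
  ~~ odd (\dim W).
Proof.
move=> ffN fW.
pose g : 'End(subvs_of W) := (linfun (vsproj W) \o f \o linfun vsval)%VF.
have ggN u : g (g u) = - u.
  rewrite /g !comp_lfunE !lfunE /= vsprojK; last exact/fW/subvsP.
  by rewrite ffN linearN /= vsvalK.
by have := lfun_sqrN1_even_dim ggN; rewrite dimvf.
Qed.

Lemma lie_bracket0l (R : fieldType) (V : vectType R) (br : V -> V -> V) :
  is_lie_bracket br -> forall y, br 0 y = 0.
Proof.
case=> brDl _ _ _ y; apply: (addrI (br 0 y)).
by rewrite addr0 -{1}(scale1r (br 0 y)) -brDl scale1r addr0.
Qed.

Section AscendingSeries.

Variables (R : fieldType) (V : vectType R) (br : V -> V -> V) (J : 'End(V)).
Hypothesis br0l : forall y, br 0 y = 0.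
Hypothesis br_central : forall x y, in_center br (br x y).
Hypothesis nijenhuis : forall x y,
  br x y + J (br (J x) y + br x (J y)) - br (J x) (J y) = 0.

Lemma asc_series1_center c :
  in_center br c -> in_center br (J c) -> asc_series br J 1 c.
Proof. by move=> cC JcC; split=> y /=; [apply: cC | apply: JcC]. Qed.

Lemma nijenhuis_center c y :
  in_center br c -> J (br (J c) y) = br (J c) (J y).
Proof.
move=> cC; have /eqP := nijenhuis c y.
by rewrite cC (cC (J y)) add0r addr0 subr_eq0 => /eqP.
Qed.

Lemma center_asc_series2 c : in_center br c -> asc_series br J 2 c.
Proof.
move=> cC; split=> y.
  by rewrite cC; apply: asc_series1_center; rewrite ?linear0; apply: br0l.
apply: asc_series1_center; first exact: br_central.
by rewrite nijenhuis_center //; apply: br_central.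
Qed.

Lemma asc_series3_full x : asc_series br J 3 x.
Proof. by split=> y; apply/center_asc_series2/br_central. Qed.

Lemma asc_series2_full_J_central :
  (forall x, asc_series br J 2 x) -> forall x y, in_center br (J (br x y)).
Proof. by move=> a2 x y; have [/(_ y) [_]] := a2 x. Qed.

End AscendingSeries.

Theorem mainTheorem7 (R : realType) (V : vectType R) (br : V -> V -> V)
  (Hlie : is_lie_bracket br)
  (H2 : two_step_nilpotent br)
  (Hdz : forall x, in_derived br x <-> in_center br x)
  (Hodd : exists W : {vspace V},
            (forall x, x \in W <-> in_derived br x) /\ odd (\dim W)) :
  forall J : 'End(V), complex_structure br J -> t_step br J 3.
Proof.
move=> J [JJ nijenhuis].
have br0l := lie_bracket0l Hlie.
have br_central x y : in_center br (br x y).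
  by apply: H2.2; exists [:: (x, y)]; rewrite big_seq1.
split=> //; split; first exact: asc_series3_full.
move=> s /andP[s_gt0 s_lt3].
have [-> | ->] : s = 1%N \/ s = 2%N by case: s s_gt0 s_lt3 => [|[|[|]]] //; auto.
  have [x [y brxy]] := H2.1.
  by exists x => -[a1x _]; apply/brxy/a1x.
apply: NNPP => /not_ex_all_not a2N.
have a2 x : asc_series br J 2 x by apply: NNPP; apply: a2N.
have [W [WE oddW]] := Hodd.
have JW x : x \in W -> J x \in W.
  move=> /WE [ps ->]; rewrite linear_sum; apply: rpred_sum => p _.
  by apply/WE/Hdz; apply: asc_series2_full_J_central.
by have := stable_sqrN1_even_dim JJ JW; rewrite oddW.
Qed.
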